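(* Let $V$ be a finite set with $|V|\ge2$, let $A$ be a real symmetric matrix indexed by $V$, and let $(X,Y)$ be a separation of $A$ such that for each $Z\in\{X,Y\}$ property (P) holds: for all $u\in Z\setminus(X\cap Y)$ and $s\in X\cap Y$, either $A_{su}>\min A$ or there exists a weighted chordless walk from $u$ to $s$ in $A[Z]$ internally vertex-disjoint from $X\cap Y$. Assume that every proper principal submatrix $A[U]$ ($U\subsetneq V$, $|U|\ge2$) satisfies (A) or (B), where for a matrix $B$ indexed by $U$: (A) means $B$ has a critical walk, and (B) means $B$ has two distinct simplicial vertices $u,v$ with $B_{uv}=\min B$. Then each $Z\in\{X,Y\}$ satisfies at least one of: (P1) $A[Z]$ has a simplicial vertex belonging to $Z\setminus(X\cap Y)$; (P2) there is a weighted chordless walk in $A[Z]$ which is rooted in $X\cap Y$.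
   Context: For a symmetric matrix $B$ indexed by $U$, $\min B=\min\{B_{xy}:x\ne y\in U\}$; $A[Z]$ is the principal submatrix indexed by $Z$. A separation of $A$ is a pair $(X,Y)$ of subsets of $V$ with $X\cup Y=V$, $X\setminus Y\ne\emptyset$, $Y\setminus X\neq\emptyset$ and $A_{xy}=\min A$ for all $x\in X\setminus Y$, $y\in Y\setminus X$. $v$ is simplicial in $B$ if $B_{yz}\ge\min\{B_{vy},B_{vz}\}$ for all distinct $y,z\in U\setminus\{v\}$. A walk is $W=(v_0,\dots,v_p)$ ($p\ge1$), from $v_0$ to $v_p$, with internal elements $I(W)=\{v_1,\dots,v_{p-1}\}$; it is closed if $v_0=v_p$; internally vertex-disjoint from $S$ if $I(W)\cap S=\emptyset$. $W$ is weighted chordless in $B$ if $B_{v_{i-1}v_{i+1}}<\min\{B_{v_{i-1}v_i},B_{v_{i+1}v_i}\}$ for $1\le i\le p-1$. A critical walk of $B$ is a closed weighted chordless walk in $B$ whose end point $v_0$ is simplicial in $B$ and for which some $u\in I(W)$ has $B_{v_0u}=\min B$. A walk is rooted in $S$ if its end points belong to $S$, its internal elements belong to the complement of $S$, and $I(W)\ne\emptyset$. *)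

From mathcomp Require Import all_boot all_order all_algebra.
Set Implicit Arguments. Unset Strict Implicit. Unset Printing Implicit Defensive.
Import Order.TTheory GRing.Theory Num.Theory.
Local Open Scope ring_scope.

Section Defs.
Variables (R : realFieldType) (V : finType) (A : V -> V -> R).

(* min B for B = A[U]: the minimum of A x y over x <> y in U
   (meaningful when #|U| >= 2). *)
Definition offdiag_vals (U : {set V}) : seq R :=
  [seq A p.1 p.2 | p <- enum [set p in setX U U | p.1 != p.2]].
Definition mmin (U : {set V}) : R :=
  let s := offdiag_vals U in foldr Num.min (head 0 s) s.

Definition simplicial (U : {set V}) (v : V) : Prop :=
  v \in U /\
  forall y z, y \in U -> z \in U -> y != v -> z != v -> y != z ->
    Num.min (A v y) (A v z) <= A y z.

Definition walk_in (U : {set V}) (w : seq V) : bool :=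
  (1 < size w)%N && all (fun x => x \in U) w.

Definition ends (w : seq V) (a b : V) : Prop :=
  exists r, w = a :: r /\ last a r = b.

(* internal elements v_1, ..., v_{p-1} *)
Definition internal (w : seq V) : seq V :=
  match w with [::] => [::] | _ :: r => take (size r).-1 r end.

Fixpoint wchordless (w : seq V) : bool :=
  match w with
  | a :: ((b :: c :: _) as t) =>
      (A a c < Num.min (A a b) (A c b)) && wchordless t
  | _ => true
  end.

Definition critical (U : {set V}) (w : seq V) : Prop :=
  walk_in U w /\ wchordless w /\
  exists v0, ends w v0 v0 /\ simplicial U v0 /\
    exists2 u, u \in internal w & A v0 u = mmin U.

Definition rooted_in (U S : {set V}) (w : seq V) : Prop :=
  walk_in U w /\
  (exists a b, ends w a b /\ a \in S /\ b \in S) /\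
  all (fun x => x \in U :\: S) (internal w) /\ internal w != [::].

Definition separation (X Y : {set V}) : Prop :=
  X :|: Y = [set: V] /\ X :\: Y != set0 /\ Y :\: X != set0 /\
  forall x y, x \in X :\: Y -> y \in Y :\: X -> A x y = mmin [set: V].

Definition condA (U : {set V}) : Prop := exists w, critical U w.
Definition condB (U : {set V}) : Prop :=
  exists u v, u != v /\ simplicial U u /\ simplicial U v /\ A u v = mmin U.

Definition propP (X Y Z : {set V}) : Prop :=
  forall u s, u \in Z :\: (X :&: Y) -> s \in X :&: Y ->
    mmin [set: V] < A s u \/
    exists w, walk_in Z w /\ wchordless w /\ ends w u s /\
      all (fun x => x \notin X :&: Y) (internal w).

Definition propP1 (X Y Z : {set V}) : Prop :=
  exists v, v \in Z :\: (X :&: Y) /\ simplicial Z v.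
Definition propP2 (X Y Z : {set V}) : Prop :=
  exists w, wchordless w /\ rooted_in Z (X :&: Y) w.
End Defs.

From mathcomp Require Import all_boot all_order all_algebra.
Set Implicit Arguments. Unset Strict Implicit. Unset Printing Implicit Defensive.
Import Order.TTheory GRing.Theory Num.Theory.
Local Open Scope ring_scope.

(* Induction on |U|, for an arbitrary root set S in place of X ∩ Y.  Let m = min A[U], pick t ∈ U \ S, let C be the component
   of t in the graph on U \ S whose edges are the pairs with weight > m, and let
   K be the vertices of S joined to C by such an edge.  Every vertex outside
   C ∪ K is at weight exactly m from C, so a simplicial vertex of A[C ∪ K] lying
   in C stays simplicial in A[U]; this settles the case C ∪ K ≠ U by induction.
   If C ∪ K = U, apply (A) or (B) to A[U] itself: either the simplicial vertex
   it provides lies outside S, or a critical walk leaves S, or we get two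
   vertices of K at weight m; the latter are joined through C by a path of
   heavy edges, and short-cutting its chords yields a rooted chordless walk. *)

Lemma rooted_segment (T : eqType) (P : pred T) (a : T) (r : seq T) :
  P a -> P (last a r) -> has (predC P) r ->
  exists s1 mid s2, [/\ infix (s1 :: rcons mid s2) (a :: r), P s1, P s2,
                        mid != [::] & all (predC P) mid].
Proof.
elim: r a => [//|b r IH] a Pa /= Plast.
have [Pb|nPb] /= := boolP (P b).
  move=> /(IH b Pb Plast) [s1 [mid [s2 [inf Ps1 Ps2 mid0 nPmid]]]].
  by exists s1, mid, s2; split=> //; apply: infix_trans inf (infix_cons _ _).
have hasPr : has P r.
  apply/hasP; exists (last b r) => //.
  move: (mem_last b r); rewrite in_cons => /predU1P[eqb|//].
  by rewrite -eqb Plast in nPb.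
case: (split_find hasPr) => s2 mid q Ps2 nPmid _.
exists a, (b :: mid), s2; split=> //.
  exact: (prefix_infix [:: a, b & rcons mid s2] q).
by rewrite /= nPb all_predC.
Qed.

Section ChordlessWalks.
Variables (R : realFieldType) (V : finType) (A : V -> V -> R).

Lemma mmin_le (U : {set V}) x y :
  x \in U -> y \in U -> x != y -> mmin A U <= A x y.
Proof.
move=> xU yU xy; rewrite /mmin /=; move: (head 0 _) => d.
have : A x y \in offdiag_vals A U.
  by apply/mapP; exists (x, y); rewrite // mem_enum !inE xU yU xy.
elim: (offdiag_vals A U) => [//|z s IH].
by rewrite in_cons /= ge_min => /predU1P[->|/IH->]; rewrite ?lexx ?orbT.
Qed.

Lemma wchordless_behead x s : wchordless A (x :: s) -> wchordless A s.
Proof. by case: s => [|y [|z r]] //= /andP[]. Qed.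

Lemma wchordless_catl s t : wchordless A (s ++ t) -> wchordless A s.
Proof. by elim: s => [|x [|y [|z r]] IH] //= /andP[-> /IH]. Qed.

Lemma wchordless_catr s t : wchordless A (s ++ t) -> wchordless A t.
Proof. by elim: s => [//|x s IH] /wchordless_behead. Qed.

Lemma wchordless_infix s t : infix s t -> wchordless A t -> wchordless A s.
Proof. by case/infixP=> p [q ->] /wchordless_catr /wchordless_catl. Qed.

Lemma internal_rcons (a b : V) mid : internal (a :: rcons mid b) = mid.
Proof. by rewrite /= size_rcons -cats1 take_size_cat. Qed.

Definition simplicial_outside (U S : {set V}) : Prop :=
  exists v, v \in U :\: S /\ simplicial A U v.

Definition rooted_chordless (U S : {set V}) : Prop :=
  exists w, wchordless A w /\ rooted_in U S w.

Lemma rooted_chordless_sub (U U' S : {set V}) :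
  U \subset U' -> rooted_chordless U S -> rooted_chordless U' S.
Proof.
move=> sUU' [w [wc [/andP[sz wU] [eab [inS ne]]]]].
exists w; split=> //; split; last split=> //; last split=> //.
  by rewrite /walk_in sz; apply: sub_all wU => x /(subsetP sUU').
by apply: sub_all inS => x; rewrite !in_setD => /andP[-> /(subsetP sUU')].
Qed.

Lemma rooted_chordless_of_walk (U S : {set V}) a r :
  a \in S -> last a r \in S -> has (fun x => x \notin S) r ->
  {subset a :: r <= U} -> wchordless A (a :: r) -> rooted_chordless U S.
Proof.
move=> aS lastS out sub wc.
have [s1 [mid [s2 [inf s1S s2S mid0 midS]]]] :=
  @rooted_segment _ (fun x => x \in S) a r aS lastS out.
have wU : {subset s1 :: rcons mid s2 <= U} by move=> x /(mem_infix inf)/sub.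
exists (s1 :: rcons mid s2); split; first exact: wchordless_infix inf wc.
split; last split; last split; rewrite ?internal_rcons //.
- by apply/andP; split; [rewrite /= size_rcons | apply/allP].
- by exists s1, s2; split=> //; exists (rcons mid s2); rewrite last_rcons.
- apply/allP => x xmid; rewrite in_setD [_ \notin S](allP midS x xmid) wU //.
  by rewrite inE mem_rcons inE xmid !orbT.
Qed.

Lemma simplicial_card_le1 (U : {set V}) v :
  v \in U -> (#|U| <= 1)%N -> simplicial A U v.
Proof.
move=> vU U1; split=> // y z yU _ yv.
by rewrite (card_le1_eqP U1 y v yU vU) eqxx in yv.
Qed.

Hypothesis Asym : forall x y, A x y = A y x.

Definition heavy (m : R) : rel V := fun x y => m < A x y.

Definition chordless_shortening m x (q q' : seq V) : Prop :=
  [/\ subseq q' q, last x q' = last x q, path (heavy m) x q',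
      wchordless A (x :: q') & q' != [::]].

Lemma chordless_prepend m x q :
  path (heavy m) x q -> wchordless A q -> q != [::] ->
  exists q', chordless_shortening m x q q'.
Proof.
elim: q x => [//|y q IH] x /andP[hxy hq] wq _.
case: q IH hq wq => [|z q] IH hq wq.
  by exists [:: y]; split; rewrite /= ?eqxx ?hxy.
have [xz|xz] := leP (A x z) m.
  exists [:: y, z & q]; split=> //; first by rewrite /= hxy.
  apply/andP; split; last exact: wq.
  rewrite lt_min (le_lt_trans xz hxy) [A z y]Asym.
  by case/andP: hq => /(le_lt_trans xz) ->.
have hxzq : path (heavy m) x (z :: q).
  by apply/andP; split; [exact: xz | case/andP: hq].
have [q' [sub lst p wc nz]] := IH x hxzq (wchordless_behead wq) isT.
by exists q'; split=> //; apply: subseq_trans sub (subseq_cons _ _).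
Qed.

Lemma chordless_subpath m x q :
  path (heavy m) x q -> q != [::] -> exists q', chordless_shortening m x q q'.
Proof.
elim: q x => [//|y q IH] x /andP[hxy hq] _.
case: q IH hq => [|z q] IH hq.
  by exists [:: y]; split; rewrite /= ?eqxx ?hxy.
have [q0 [sub lst p wc _]] := IH y hq isT.
have hyq0 : path (heavy m) x (y :: q0) by rewrite /= hxy.
have [q' [sub' lst' p' wc' nz']] := chordless_prepend hyq0 wc isT.
exists q'; split=> //; last by rewrite lst'.
by apply: subseq_trans sub' _; rewrite /= eqxx.
Qed.

Section HeavyComponent.
Variables (U S : {set V}) (t0 : V).

Local Notation m := (mmin A U).

Definition heavy_out : rel V :=
  fun x y => [&& x \in U :\: S, y \in U :\: S & heavy m x y].

Definition heavy_comp : {set V} :=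
  [set x in U :\: S | connect heavy_out t0 x].

Definition heavy_attach : {set V} :=
  [set s in U :&: S | [exists c in heavy_comp, heavy m s c]].

Definition heavy_closure : {set V} := heavy_comp :|: heavy_attach.

Lemma heavy_comp_out : {subset heavy_comp <= U :\: S}.
Proof. by move=> x; rewrite inE => /andP[]. Qed.

Lemma heavy_closure_sub : heavy_closure \subset U.
Proof.
apply/subsetP => x.
by rewrite !inE => /orP[/andP[/andP[_ ->]] | /andP[/andP[->]]].
Qed.

Lemma heavy_closureDS v : v \in heavy_closure :\: S -> v \in heavy_comp.
Proof.
rewrite !inE => /andP[vS /orP[// | /andP[/andP[_ vS']]]].
by rewrite vS' in vS.
Qed.

Lemma heavy_out_path_sub x p : path heavy_out x p -> {subset p <= U :\: S}.
Proof.
elim: p x => [//|y p IH] x /= /andP[/and3P[_ yUS _] /IH pUS] z.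
by rewrite inE => /predU1P[->|/pUS].
Qed.

Lemma light_from_comp v x :
  v \in heavy_comp -> x \in U -> x \notin heavy_closure -> A v x <= m.
Proof.
move=> vC xU; rewrite leNgt; apply: contra => hvx.
have [xS|xS] := boolP (x \in S).
  rewrite inE; apply/orP; right; rewrite !inE xU xS /=.
  by apply/exists_inP; exists v; rewrite // /heavy Asym.
have xUS : x \in U :\: S by rewrite in_setD xS.
rewrite inE; apply/orP; left; rewrite inE xUS /=.
move: vC; rewrite inE => /andP[vUS cv].
by apply: connect_trans cv (connect1 _); rewrite /heavy_out vUS xUS.
Qed.

Lemma simplicial_lift v :
  v \in heavy_comp -> simplicial A heavy_closure v -> simplicial A U v.
Proof.
move=> vC [_ sv]; split=> [|y z yU zU yv zv yz].
  by case/setDP: (heavy_comp_out vC).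
have [yW|yW] := boolP (y \in heavy_closure); last first.
  by rewrite ge_min (le_trans (light_from_comp vC yU yW) (mmin_le yU zU yz)).
have [zW|zW] := boolP (z \in heavy_closure); last first.
  by rewrite ge_min (le_trans (light_from_comp vC zU zW) (mmin_le yU zU yz)) orbT.
exact: sv.
Qed.

(* Two attachment vertices at weight m are joined by a heavy path through the
   component; its first step cannot go straight to the other end. *)
Lemma attach_rooted s1 s2 :
  s1 \in heavy_attach -> s2 \in heavy_attach -> A s1 s2 <= m ->
  rooted_chordless U S.
Proof.
rewrite !inE => /andP[/andP[s1U s1S] /exists_inP[c1 c1C h1]].
move=> /andP[/andP[s2U s2S] /exists_inP[c2 c2C h2]] light.
have heavy_out_sym : symmetric heavy_out.
  by move=> x y; rewrite /heavy_out /heavy Asym andbCA.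
have /connectP[p pp lp] : connect heavy_out c1 c2.
  move: c1C c2C; rewrite !inE => /andP[_ t0c1] /andP[_ t0c2].
  by apply: connect_trans t0c2; rewrite (sym_connect_sym heavy_out_sym).
have pUS := heavy_out_path_sub pp.
have c1US := heavy_comp_out c1C.
have hp : path (heavy m) s1 (c1 :: rcons p s2).
  have hc : path (heavy m) c1 (rcons p s2).
    rewrite rcons_path -lp; apply/andP; split; last by rewrite /heavy Asym.
    by apply: sub_path pp => x y /and3P[_ _].
  by apply/andP.
have [[|b q] [sub lst hq wc nz]] := chordless_subpath hp isT; first by [].
have bq : b \in c1 :: rcons p s2 by apply: (mem_subseq sub); rewrite mem_head.
apply: (@rooted_chordless_of_walk U S s1 (b :: q)) => //.
- by rewrite lst /= last_rcons.
- apply/hasP; exists b; first exact: mem_head.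
  move: bq hq; rewrite inE mem_rcons inE => /or3P[/eqP-> | /eqP-> | /pUS].
  + by case/setDP: c1US.
  + by rewrite /= /heavy ltNge light.
  + by case/setDP.
- move=> x; rewrite inE => /predU1P[-> // | /(mem_subseq sub)].
  rewrite inE mem_rcons inE => /or3P[/eqP-> | /eqP-> // | /pUS].
  + by case/setDP: c1US.
  + by case/setDP.
Qed.

Lemma attach_of_full x :
  U \subset heavy_closure -> x \in U -> x \in S -> x \in heavy_attach.
Proof.
move=> full xU xS; have := subsetP full x xU.
rewrite inE => /orP[/heavy_comp_out | //].
by rewrite in_setD xS.
Qed.

Lemma outside_or_rooted_of_full :
  U \subset heavy_closure -> condA A U \/ condB A U ->
  simplicial_outside U S \/ rooted_chordless U S.
Proof.
move=> full.
have light_pair u v : u \in U -> v \in U -> u \in S -> v \in S -> A u v = m ->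
    rooted_chordless U S.
  move=> uU vU uS vS Auv.
  by apply: (@attach_rooted u v); rewrite ?attach_of_full ?Auv.
have simplicial_out v : simplicial A U v -> v \notin S -> simplicial_outside U S.
  by move=> [vU sv] vS; exists v; rewrite in_setD vS vU.
case=> [[w [wU [wc [v0 [[r [ew lr]] [sv0 [u uw Au]]]]]]] |
        [u [v [_ [su [sv Auv]]]]]].
  subst w.
  have [v0S|v0S] := boolP (v0 \in S); last by left; apply: simplicial_out sv0 v0S.
  have v0rU : {subset v0 :: r <= U}.
    by case/andP: wU => _ /allP wU x xr; apply: wU.
  have [out|/hasPn inS] := boolP (has (fun x => x \notin S) r).
    have lastS : last v0 r \in S by rewrite lr.
    by right; apply: rooted_chordless_of_walk v0S lastS out v0rU wc.
  have ur : u \in r := mem_take uw.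
  have uS : u \in S := negbNE (inS u ur).
  have v0U : v0 \in U by apply: v0rU; rewrite mem_head.
  have uU : u \in U by apply: v0rU; rewrite inE ur orbT.
  by right; apply: (light_pair v0 u).
have [uS|uS] := boolP (u \in S); last by left; apply: simplicial_out su uS.
have [vS|vS] := boolP (v \in S); last by left; apply: simplicial_out sv vS.
by right; apply: (light_pair u v) => //; [case: su | case: sv].
Qed.

End HeavyComponent.

Definition hereditary_AB (U : {set V}) : Prop :=
  forall W : {set V}, W \subset U -> (2 <= #|W|)%N -> condA A W \/ condB A W.

Lemma simplicial_outside_or_rooted (U S : {set V}) :
  hereditary_AB U -> U :\: S != set0 ->
  simplicial_outside U S \/ rooted_chordless U S.
Proof.
have [n leUn] := ubnP #|U|; elim: n U leUn S => // n IH U /ltnSE-leUn S hU.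
case/set0Pn=> t0 t0US.
have [le1|gt1] := leqP #|U| 1.
  have t0U : t0 \in U by case/setDP: t0US.
  by left; exists t0; split; last exact: simplicial_card_le1 t0U le1.
have t0C : t0 \in heavy_comp U S t0 by rewrite inE t0US connect0.
have [pW|] := boolP (heavy_closure U S t0 \proper U); last first.
  rewrite properE heavy_closure_sub /= negbK => full.
  exact: outside_or_rooted_of_full full (hU U (subxx U) gt1).
have hW : hereditary_AB (heavy_closure U S t0).
  by move=> W sW; apply: hU; apply: subset_trans sW (proper_sub pW).
have t0W : heavy_closure U S t0 :\: S != set0.
  by apply/set0Pn; exists t0; rewrite in_setD in_setU t0C andbT; case/setDP: t0US.
case: (IH _ (leq_trans (proper_card pW) leUn) S hW t0W) => [[v [vWS sv]] | rw].
  have vC := heavy_closureDS vWS.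
  left; exists v; split; first exact: heavy_comp_out vC.
  exact: simplicial_lift vC sv.
by right; apply: rooted_chordless_sub rw; apply: proper_sub.
Qed.

Lemma side_dichotomy (Z Z' : {set V}) :
  (forall U : {set V}, U \proper [set: V] -> (2 <= #|U|)%N ->
     condA A U \/ condB A U) ->
  Z :\: Z' != set0 -> Z' :\: Z != set0 ->
  simplicial_outside Z (Z :&: Z') \/ rooted_chordless Z (Z :&: Z').
Proof.
move=> hAB /set0Pn[z] + /set0Pn[y]; rewrite !inE => /andP[zNZ' zZ] /andP[yNZ _].
apply: simplicial_outside_or_rooted.
  move=> W sW; apply: hAB; apply: sub_proper_trans sW _.
  by apply/properP; split; [apply: subsetT | exists y].
by apply/set0Pn; exists z; rewrite !inE zZ zNZ'.
Qed.

End ChordlessWalks.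

Theorem lemma9 (R : realFieldType) (V : finType) (A : V -> V -> R)
  (X Y : {set V}) :
  (1 < #|V|)%N ->
  (forall x y, A x y = A y x) ->
  separation A X Y ->
  (forall Z, Z = X \/ Z = Y -> propP A X Y Z) ->
  (forall U : {set V}, U \proper [set: V] -> (2 <= #|U|)%N ->
     condA A U \/ condB A U) ->
  forall Z, Z = X \/ Z = Y -> propP1 A X Y Z \/ propP2 A X Y Z.
Proof.
move=> _ Asym [_ [XnY [YnX _]]] _ hAB Z [->|->].
  by case: (side_dichotomy Asym hAB XnY YnX); [left | right].
by move: (side_dichotomy Asym hAB YnX XnY); rewrite setIC => -[]; [left | right].
Qed.
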